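(* In the polyhedral environment, when agents have subadditive valuations, the pure Price of Anarchy of the proportional allocation mechanism is exactly $2$: for every instance and every pure Nash equilibrium $\mathbf{b}$, $\sum_iv_i(x_i(\mathbf{b}))\ge\frac12\sum_iv_i(o_i)$, where $\mathbf{o}$ is an optimal feasible allocation; and for every $\delta>0$ there is an instance with subadditive valuations and a pure Nash equilibrium whose social welfare is at most $\frac{1}{2-\delta}$ times the optimal social welfare.
   Context: Polyhedral environment: there are $n$ agents and $m$ resources, and a non-negative $m\times n$ matrix $A=(a_{ji})$, written $a_{ij}$ for the entry corresponding to agent $i$ and resource $j$ (each agent has at least one $j$ with $a_{ij}>0$). An allocation is a vector $\mathbf{x}=(x_1,\dots,x_n)$ of non-negative scalars, feasible if $A\mathbf{x}\le\mathbf{1}$ componentwise. Agent $i$ has a valuation $v_i:\mathbb{R}_{\ge0}\to\mathbb{R}_{\ge0}$ of her single-parameter allocation that is monotone non-decreasing and subadditive ($v_i(x+y)\le v_i(x)+v_i(y)$). Proportional allocation mechanism: each agent $i$ bids $b_{ij}\ge0$ on each resource $j$, receives $x_i(\mathbf{b})=\min_{j:a_{ij}>0}\frac{b_{ij}}{a_{ij}\sum_{k}b_{kj}}$ and pays $\sum_jb_{ij}$; utility $u_i=v_i(x_i)-\sum_jb_{ij}$. Social welfare is $\sum_iv_i(x_i)$. A pure Nash equilibrium is a bid profile $\mathbf{b}$ such that no agent can increase her utility by unilaterally changing her bids. *)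

From HB Require Import structures.
From mathcomp Require Import all_boot all_order all_algebra.
From mathcomp Require Import reals.
Set Implicit Arguments. Unset Strict Implicit. Unset Printing Implicit Defensive.
Import Order.TTheory GRing.Theory Num.Theory.
Local Open Scope ring_scope.

Section Polyhedral.
Variable R : realType.
Variables n m : nat.

Definition subadditive_valuation (f : R -> R) : Prop :=
  [/\ (forall x, 0 <= x -> 0 <= f x),
      (forall x y, 0 <= x -> x <= y -> f x <= f y) &
      (forall x y, 0 <= x -> 0 <= y -> f (x + y) <= f x + f y)].

Definition valid_instance (a : 'I_n -> 'I_m -> R) (v : 'I_n -> R -> R) : Prop :=
  [/\ (forall i j, 0 <= a i j),
      (forall i, exists j, 0 < a i j) &
      (forall i, subadditive_valuation (v i))].

(* x_i(b) = min_{j : a_ij > 0} b_ij / (a_ij * sum_k b_kj)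
   (with the MathComp convention y / 0 = 0). *)
Definition share (a : 'I_n -> 'I_m -> R) (b : 'I_n -> 'I_m -> R)
  (i : 'I_n) (j : 'I_m) : R :=
  b i j / (a i j * \sum_(k < n) b k j).

Definition alloc (a : 'I_n -> 'I_m -> R) (b : 'I_n -> 'I_m -> R)
  (i : 'I_n) : R :=
  if [pick j | 0 < a i j] is Some j0 then
    \big[Order.min/share a b i j0]_(j | 0 < a i j) share a b i j
  else 0.

Definition payment (b : 'I_n -> 'I_m -> R) (i : 'I_n) : R :=
  \sum_(j < m) b i j.

Definition utility (a : 'I_n -> 'I_m -> R) (v : 'I_n -> R -> R)
  (b : 'I_n -> 'I_m -> R) (i : 'I_n) : R :=
  v i (alloc a b i) - payment b i.

Definition deviate (b : 'I_n -> 'I_m -> R) (i : 'I_n) (bi : 'I_m -> R)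
  : 'I_n -> 'I_m -> R :=
  fun k j => if k == i then bi j else b k j.

Definition nonneg_bids (b : 'I_n -> 'I_m -> R) : Prop :=
  forall i j, 0 <= b i j.

Definition pure_nash (a : 'I_n -> 'I_m -> R) (v : 'I_n -> R -> R)
  (b : 'I_n -> 'I_m -> R) : Prop :=
  nonneg_bids b /\
  forall (i : 'I_n) (bi : 'I_m -> R), (forall j, 0 <= bi j) ->
    utility a v (deviate b i bi) i <= utility a v b i.

Definition social_welfare (a : 'I_n -> 'I_m -> R) (v : 'I_n -> R -> R)
  (b : 'I_n -> 'I_m -> R) : R :=
  \sum_(i < n) v i (alloc a b i).

Definition feasible (a : 'I_n -> 'I_m -> R) (o : 'I_n -> R) : Prop :=
  (forall i, 0 <= o i) /\ (forall j, \sum_(i < n) a i j * o i <= 1).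

Definition welfare_of (v : 'I_n -> R -> R) (o : 'I_n -> R) : R :=
  \sum_(i < n) v i (o i).

End Polyhedral.

From HB Require Import structures.
From mathcomp Require Import all_boot all_order all_algebra.
From mathcomp Require Import reals.
From mathcomp Require Import ring lra.
Set Implicit Arguments. Unset Strict Implicit. Unset Printing Implicit Defensive.
Import Order.TTheory GRing.Theory Num.Theory.
Local Open Scope ring_scope.

(* Upper bound: at a Nash equilibrium b, agent i may deviate to the bids
   a_ij o_i (B_j + e), where B_j is the total bid on resource j. Since
   a_ij o_i <= 1, this secures her a share of at least o_i / 2 on every
   resource, hence value v_i(o_i / 2) >= v_i(o_i) / 2 by subadditivity, at
   cost sum_j a_ij o_i (B_j + e). Summing the equilibrium inequalities over
   agents and using feasibility of o, the total deviation cost is at most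
   sum_j B_j + m e, which is exactly the total payment at b plus m e; letting
   e -> 0 gives SW(b) >= OPT / 2.
   Lower bound: one resource, a step valuation 1 + [x >= 1] and two linear
   valuations c x that share the resource at equilibrium while the step
   agent bids nothing; the welfare is 1 + c against an optimum of 2, and
   (2 - 2c)(1 + c) <= 2. *)

Section Deviation.
Variables (R : realType) (n m : nat) (a b : 'I_n -> 'I_m -> R).

Definition total_bid (j : 'I_m) : R := \sum_(k < n) b k j.

Lemma total_bid_ge0 j : nonneg_bids b -> 0 <= total_bid j.
Proof. by move=> hb; apply: sumr_ge0 => k _; apply: hb. Qed.

Lemma sum_payment : \sum_(i < n) payment b i = \sum_(j < m) total_bid j.
Proof. exact: exchange_big. Qed.

Lemma payment_deviate i bi : payment (deviate b i bi) i = \sum_(j < m) bi j.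
Proof. by apply: eq_bigr => j _; rewrite /deviate eqxx. Qed.

Lemma total_bid_deviate i bi j :
  \sum_(k < n) deviate b i bi k j = bi j + \sum_(k < n | k != i) b k j.
Proof.
rewrite (bigD1 i) //= /deviate eqxx; congr (_ + _).
by apply: eq_bigr => k /negbTE ->.
Qed.

Lemma alloc_ge i (c : R) :
  (exists j, 0 < a i j) -> (forall j, 0 < a i j -> c <= share a b i j) ->
  c <= alloc a b i.
Proof.
move=> [j hj] hc; rewrite /alloc; case: pickP => [j0 hj0|none]; last first.
  by move: (none j); rewrite hj.
apply: (big_ind (fun y => c <= y)); first exact: hc.
  by move=> x y hx hy; rewrite le_min hx hy.
by move=> k hk; apply: hc.
Qed.

End Deviation.

Lemma subadditive_half (R : realType) (f : R -> R) x :
  subadditive_valuation f -> 0 <= x -> f x / 2 <= f (x / 2).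
Proof.
move=> [_ _ fD] hx; have hx2 : 0 <= x / 2 by apply: divr_ge0.
have := fD _ _ hx2 hx2; rewrite -splitr => h; lra.
Qed.

Lemma half_le_proportional_share (R : realType) (aij oi X S : R) :
  0 < aij -> 0 <= oi -> aij * oi <= 1 -> 0 <= S -> S <= X -> 0 < X ->
  oi / 2 <= aij * oi * X / (aij * (aij * oi * X + S)).
Proof.
move=> ha ho hp hS hSX hX.
have [->|oi_neq0] := eqVneq oi 0.
  by rewrite !(mulr0, mul0r).
have hp0 : 0 < aij * oi by rewrite mulr_gt0 // lt_def oi_neq0 ho.
have hpX : aij * oi * X <= X by rewrite ler_piMl // ltW.
rewrite ler_pdivlMr; last by rewrite mulr_gt0 // ltr_wpDr // mulr_gt0.
have -> : oi / 2 * (aij * (aij * oi * X + S))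
        = aij * oi / 2 * (aij * oi * X + S) by ring.
apply: le_trans (_ : aij * oi / 2 * (2 * X) <= _); last by rewrite mulrA divfK ?pnatr_eq0.
by rewrite ler_wpM2l ?divr_ge0 ?(ltW hp0) //; lra.
Qed.

Section NashWelfare.
Variables (R : realType) (n m : nat) (a : 'I_n -> 'I_m -> R)
  (v : 'I_n -> R -> R) (b : 'I_n -> 'I_m -> R) (o : 'I_n -> R).
Hypotheses (hval : valid_instance a v) (hnash : pure_nash a v b)
  (hfeas : feasible a o).

Definition opt_bid (e : R) (i : 'I_n) (j : 'I_m) : R :=
  a i j * o i * (total_bid b j + e).

Lemma opt_bid_ge0 (e : R) i j : 0 < e -> 0 <= opt_bid e i j.
Proof.
move: hval hnash hfeas => [ha _ _] [hb _] [ho _] he.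
by rewrite !mulr_ge0 // addr_ge0 ?total_bid_ge0 ?ltW.
Qed.

Lemma feasible_entry_le1 i j : a i j * o i <= 1.
Proof.
move: hval hfeas => [ha _ _] [ho hcol]; apply: le_trans (hcol j).
by rewrite (bigD1 i) //= lerDl sumr_ge0 // => k _; rewrite mulr_ge0.
Qed.

Lemma alloc_opt_bid_ge (e : R) i :
  0 < e -> o i / 2 <= alloc a (deviate b i (opt_bid e i)) i.
Proof.
move: hval hnash hfeas => [ha hpos _] [hb _] [ho _] he.
apply: alloc_ge; first exact: hpos.
move=> j hj; rewrite /share total_bid_deviate /deviate eqxx /opt_bid.
have hS : 0 <= \sum_(k < n | k != i) b k j by apply: sumr_ge0.
have hSB : \sum_(k < n | k != i) b k j <= total_bid b j.
  by rewrite /total_bid [X in _ <= X](bigD1 i) //= lerDr.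
apply: half_le_proportional_share => //; first exact: feasible_entry_le1.
  by apply: le_trans hSB _; rewrite lerDl ltW.
by rewrite ltr_wpDl ?total_bid_ge0.
Qed.

Lemma half_opt_utility_le (e : R) i : 0 < e ->
  v i (o i) / 2 - \sum_(j < m) opt_bid e i j <= utility a v b i.
Proof.
move: hval hnash hfeas => [_ _ hv] [_ hdev] [ho _] he.
apply: le_trans (hdev i (opt_bid e i) (opt_bid_ge0 i ^~ he)).
have [_ hmono _] := hv i.
rewrite /utility payment_deviate lerD2r.
apply: le_trans (subadditive_half (hv i) (ho i)) _.
by apply: hmono; [rewrite divr_ge0 | exact: alloc_opt_bid_ge].
Qed.

Lemma sum_opt_bid_le (e : R) : 0 < e ->
  \sum_(i < n) \sum_(j < m) opt_bid e i j <= \sum_(j < m) total_bid b j + m%:R * e.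
Proof.
move: hnash hfeas => [hb _] [_ hcol] he.
have -> : m%:R * e = \sum_(j < m) e by rewrite sumr_const card_ord mulr_natl.
rewrite exchange_big -big_split /=.
apply: ler_sum => j _; rewrite /opt_bid -mulr_suml ler_piMl //.
by rewrite addr_ge0 ?total_bid_ge0 ?ltW.
Qed.

Lemma half_opt_le_welfare_approx (e : R) : 0 < e ->
  welfare_of v o / 2 <= social_welfare a v b + m%:R * e.
Proof.
move=> he; have := ler_sum (index_enum 'I_n) (fun i _ => half_opt_utility_le i he).
move/(_ xpredT); rewrite !sumrB (sum_payment b) /welfare_of mulr_suml.
by have := sum_opt_bid_le he; rewrite /social_welfare; lra.
Qed.

Lemma half_opt_le_welfare : welfare_of v o / 2 <= social_welfare a v b.
Proof.
apply/ler_addgt0Pr => e he; have hm : 0 < m.+1%:R :> R by rewrite ltr0n.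
apply: le_trans (half_opt_le_welfare_approx (divr_gt0 he hm)) _.
rewrite lerD2l mulrA ler_pdivrMr // [m%:R * e]mulrC ler_wpM2l ?(ltW he) //.
by rewrite ler_nat.
Qed.

End NashWelfare.

Section SingleResource.
Variables (R : realType) (n : nat) (v : 'I_n -> R -> R).

Definition unit_coef (i : 'I_n) (j : 'I_1) : R := 1.

Lemma alloc_single_resource (b : 'I_n -> 'I_1 -> R) i :
  alloc unit_coef b i = b i ord0 / \sum_(k < n) b k ord0.
Proof.
transitivity (share unit_coef b i ord0); last by rewrite /share mul1r.
rewrite /alloc; case: pickP => [j _|none]; last by move: (none ord0); rewrite ltr01.
apply: (big_ind (fun y => y = share unit_coef b i ord0)).
- by rewrite (ord1 j).
- by move=> x y -> ->; rewrite minxx.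
- by move=> k _; rewrite (ord1 k).
Qed.

Lemma utility_single_resource (b : 'I_n -> 'I_1 -> R) i :
  utility unit_coef v b i = v i (b i ord0 / \sum_(k < n) b k ord0) - b i ord0.
Proof. by rewrite /utility alloc_single_resource /payment big_ord1. Qed.

Lemma utility_deviate_single_resource (b : 'I_n -> 'I_1 -> R) i bi :
  utility unit_coef v (deviate b i bi) i =
  v i (bi ord0 / (bi ord0 + \sum_(k < n | k != i) b k ord0)) - bi ord0.
Proof. by rewrite utility_single_resource total_bid_deviate /deviate eqxx. Qed.

End SingleResource.

Arguments unit_coef {R n} i j.

Lemma step_valuation_subadditive (R : realType) :
  subadditive_valuation (fun x : R => 1 + (if 1 <= x then 1 else 0)).
Proof.
split.
- by move=> x _; case: ifP => _; lra.
- by move=> x y _ hxy; case: (lerP 1 x) => h1; case: (lerP 1 y) => h2 //; lra.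
- by move=> x y _ _; case: ifP => _; case: ifP => _; case: ifP => _; lra.
Qed.

Lemma linear_valuation_subadditive (R : realType) (c : R) :
  0 <= c -> subadditive_valuation (fun x : R => c * x).
Proof.
move=> hc; split.
- by move=> x hx; rewrite mulr_ge0.
- by move=> x y _ hxy; rewrite ler_wpM2l.
- by move=> x y _ _; rewrite mulrDr.
Qed.

(* Against a total opposing bid q, a bidder of marginal value 4 q is best off
   bidding q; the gap is (t - q)^2 / (t + q). *)
Lemma linear_bid_best_response (R : realType) (q t : R) :
  0 < q -> 0 <= t -> 4 * q * (t / (t + q)) - t <= q.
Proof.
move=> hq ht; have htq : 0 < t + q by lra.
suff : 4 * q * t / (t + q) <= t + q by rewrite mulrA; lra.
by rewrite ler_pdivrMr //; have := sqr_ge0 (t - q); nra.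
Qed.

Section TightInstance.
Variables (R : realType) (c : R).

Definition tight_val (i : 'I_3) (x : R) : R :=
  if i == ord0 then 1 + (if 1 <= x then 1 else 0) else c * x.

Definition tight_bid (i : 'I_3) (j : 'I_1) : R := if i == ord0 then 0 else c / 4.

Definition tight_opt (i : 'I_3) : R := if i == ord0 then 1 else 0.

Lemma tight_valid : 0 <= c -> valid_instance unit_coef tight_val.
Proof.
move=> hc; split=> [i j|i|i]; first exact: ler01.
  by exists ord0; exact: ltr01.
rewrite /tight_val; case: eqP => _; first exact: step_valuation_subadditive.
exact: linear_valuation_subadditive.
Qed.

Lemma tight_feasible : feasible unit_coef tight_opt.
Proof.
split=> [i|j]; first by rewrite /tight_opt; case: eqP.
by rewrite !big_ord_recl big_ord0 /unit_coef /tight_opt /=; lra.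
Qed.

Lemma tight_opt_welfare : welfare_of tight_val tight_opt = 2.
Proof. by rewrite /welfare_of !big_ord_recl big_ord0 /tight_val /tight_opt /= lexx; lra. Qed.

Lemma tight_half_share : 0 < c -> c / 4 / (c / 2) = 1 / 2.
Proof. by move=> hc; field; rewrite gt_eqF. Qed.

Lemma tight_total_bid : \sum_(k < 3) tight_bid k ord0 = c / 2.
Proof. by rewrite !big_ord_recl big_ord0 /tight_bid /=; lra. Qed.

Lemma tight_welfare : 0 < c -> social_welfare unit_coef tight_val tight_bid = 1 + c.
Proof.
move=> hc; rewrite /social_welfare !big_ord_recl big_ord0.
rewrite !alloc_single_resource tight_total_bid /tight_val /tight_bid /= mul0r ler10.
by rewrite tight_half_share //; lra.
Qed.

Lemma tight_nash : 0 < c -> pure_nash unit_coef tight_val tight_bid.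
Proof.
move=> hc; split=> [i j|i bi hbi]; first by rewrite /tight_bid; case: ifP => _; lra.
rewrite utility_deviate_single_resource utility_single_resource tight_total_bid.
have -> : \sum_(k < 3 | k != i) tight_bid k ord0 = c / 2 - tight_bid i ord0.
  by rewrite -tight_total_bid [in RHS](bigD1 i) //= addrAC subrr add0r.
move: (bi ord0) (hbi ord0) => t ht.
rewrite /tight_val /tight_bid; case: eqP => _.
- have hlt : t / (t + c / 2) < 1 by rewrite ltr_pdivrMr ?mul1r; lra.
  by rewrite subr0 mul0r ler10 (lt_geF hlt); lra.
- rewrite tight_half_share //.
  have -> : c / 2 - c / 4 = c / 4 by field.
  have := linear_bid_best_response (divr_gt0 hc (ltr0n R 4)) ht.
  by rewrite [4 * _]mulrCA divff ?pnatr_eq0 // mulr1; lra.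
Qed.

End TightInstance.

Theorem theorem8 (R : realType) :
  (forall (n m : nat) (a : 'I_n -> 'I_m -> R) (v : 'I_n -> R -> R)
          (b : 'I_n -> 'I_m -> R) (o : 'I_n -> R),
     valid_instance a v -> pure_nash a v b -> feasible a o ->
     welfare_of v o / 2 <= social_welfare a v b)
  /\
  (forall delta : R, 0 < delta ->
     exists (n m : nat) (a : 'I_n -> 'I_m -> R) (v : 'I_n -> R -> R)
            (b : 'I_n -> 'I_m -> R) (o : 'I_n -> R),
       [/\ valid_instance a v, pure_nash a v b, feasible a o,
           0 < social_welfare a v b &
           (2 - delta) * social_welfare a v b <= welfare_of v o]).
Proof.
split=> [n m a v b o|delta hdelta]; first exact: half_opt_le_welfare.
have hc : 0 < delta / 2 by rewrite divr_gt0.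
exists 3%N, 1%N, unit_coef, (tight_val (delta / 2)), (tight_bid (delta / 2)),
  (tight_opt R).
split; [exact/tight_valid/ltW | exact: tight_nash | exact: tight_feasible | |].
- by rewrite tight_welfare //; lra.
- by rewrite tight_welfare // tight_opt_welfare; nra.
Qed.
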